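(* There exist a sequence of primes $p_j\to\infty$ and a sequence of angles $\alpha_j\in(0,\pi)$ with $\alpha_j\to\pi$ such that, for each $j$, the isosceles triangle whose angle at the apex (between the two equal sides) is $\alpha_j$ is Euclidean sub-$p_j$-toral.
   Context: A $p$-torus is a group isomorphic to $(\mathbb{Z}_p)^\alpha$ for some $\alpha\ge1$. A set $X\subset\mathbb{R}^k$ is Euclidean sub-$p$-toral if there exist $n\ge k$, a $p$-torus $G$ and an action of $G$ on $\mathbb{R}^n$ by isometries such that $X$ (viewed in $\mathbb{R}^n$ via the standard inclusion $\mathbb{R}^k\subset\mathbb{R}^n$) is contained in a single $G$-orbit. A triangle is identified with its set of three vertices. *)

From HB Require Import structures.
From mathcomp Require Import all_boot all_order all_algebra.
From mathcomp Require Import all_classical all_reals all_analysis.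
Set Implicit Arguments. Unset Strict Implicit. Unset Printing Implicit Defensive.
Import Order.TTheory GRing.Theory Num.Theory.
Local Open Scope ring_scope.

Definition ptorus (p a : nat) := {ffun 'I_a -> 'Z_p}.

Definition sqdist {R : realType} {n : nat} (u v : 'rV[R]_n) : R :=
  \sum_(i < n) (u 0 i - v 0 i) ^+ 2.

Definition isometry {R : realType} {n : nat} (f : 'rV[R]_n -> 'rV[R]_n) : Prop :=
  forall u v, sqdist (f u) (f v) = sqdist u v.

Definition isometric_action {R : realType} (p a n : nat)
    (act : ptorus p a -> 'rV[R]_n -> 'rV[R]_n) : Prop :=
  [/\ forall g, isometry (act g),
      forall x, act 0 x = x &
      forall g h x, act (g + h) x = act g (act h x)].

(* Standard inclusion R^k \subset R^n (pad with zeros). *)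
Definition embed {R : realType} {k n : nat} (v : 'rV[R]_k) : 'rV[R]_n :=
  \row_(i < n) oapp (fun j : 'I_k => v 0 j) 0 (insub (nat_of_ord i) : option 'I_k).

Definition sub_ptoral {R : realType} (p k : nat) (X : set 'rV[R]_k) : Prop :=
  exists (n a : nat) (act : ptorus p a -> 'rV[R]_n -> 'rV[R]_n) (x0 : 'rV[R]_n),
    [/\ (k <= n)%N, (1 <= a)%N, isometric_action act &
        forall x, X x -> exists g, act g x0 = embed x].

Definition pt2 {R : realType} (a b : R) : 'rV[R]_2 :=
  \row_(i < 2) (if nat_of_ord i == 0%N then a else b).

(* The isosceles triangle with apex angle al (legs of length 1, apex at origin). *)
Definition isosceles {R : realType} (al : R) : set 'rV[R]_2 :=
  [set x | x = pt2 0 0 \/ x = pt2 1 0 \/ x = pt2 (cos al) (sin al)].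

From Pilot Require Import Defs.
From HB Require Import structures.
From mathcomp Require Import all_boot all_order all_algebra.
From mathcomp Require Import all_classical all_reals all_analysis.
From mathcomp Require Import ring lra.
Import Order.TTheory GRing.Theory Num.Theory.
Import numFieldNormedType.Exports.
Local Open Scope ring_scope.
Local Open Scope classical_set_scope.

(* Three consecutive vertices of a regular q-gon form an isosceles triangle
   with apex angle pi - 2 pi / q.  The rotations by multiples of 2 pi / q
   about the centre of the polygon are an isometric action of Z_q whose orbit
   through one vertex contains all the vertices, so this triangle is
   sub-q-toral.  Taking q = p prime, p -> oo, the apex angles tend to pi. *)

Lemma embed_id (R : realType) (k : nat) (v : 'rV[R]_k) : embed v = v.
Proof. by apply/rowP => i; rewrite /embed mxE valK. Qed.

Section PlaneRotation.
Context {R : realType}.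

Lemma sqdist2 (u v : 'rV[R]_2) :
  sqdist u v = (u 0 ord0 - v 0 ord0) ^+ 2 + (u 0 ord_max - v 0 ord_max) ^+ 2.
Proof.
rewrite /sqdist big_ord_recr big_ord1 /=.
by rewrite (_ : widen_ord _ ord0 = ord0) //; apply: val_inj.
Qed.

Lemma row2P (u v : 'rV[R]_2) :
  u 0 ord0 = v 0 ord0 -> u 0 ord_max = v 0 ord_max -> u = v.
Proof.
move=> eq0 eq1; apply/rowP => -[[|[|//]] i2].
- by rewrite (_ : Ordinal i2 = ord0) //; apply: val_inj.
- by rewrite (_ : Ordinal i2 = ord_max) //; apply: val_inj.
Qed.

Definition rot2 (a c1 c2 : R) (x : 'rV[R]_2) : 'rV[R]_2 :=
  pt2 (c1 + cos a * (x 0 ord0 - c1) - sin a * (x 0 ord_max - c2))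
      (c2 + sin a * (x 0 ord0 - c1) + cos a * (x 0 ord_max - c2)).

Lemma rot2_isometry (a c1 c2 : R) : Defs.isometry (rot2 a c1 c2).
Proof.
move=> u v; rewrite !sqdist2 !mxE /=.
rewrite -[RHS]mul1r -(cos2Dsin2 a); ring.
Qed.

Lemma rot2_0 (c1 c2 : R) (x : 'rV[R]_2) : rot2 0 c1 c2 x = x.
Proof. by apply: row2P; rewrite !mxE /= cos0 sin0; ring. Qed.

Lemma rot2D (a b c1 c2 : R) (x : 'rV[R]_2) :
  rot2 (a + b) c1 c2 x = rot2 a c1 c2 (rot2 b c1 c2 x).
Proof. by apply: row2P; rewrite !mxE /= cosD sinD; ring. Qed.

Lemma rot2D2pi (a : R) (n : nat) : rot2 (a + pi *+ 2 *+ n) = rot2 a.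
Proof. by rewrite /rot2 (periodicn (@cosD2pi R)) (periodicn (@sinD2pi R)). Qed.

End PlaneRotation.

Section CyclicRotationAction.
Context {R : realType}.
Variable q : nat.
Hypothesis q_gt1 : (1 < q)%N.

Let Zp_modE : (Zp_trunc q).+2 = q. Proof. exact: Zp_cast. Qed.

Let Zp_add_val (a b : 'Z_q) : (a + b)%R = ((a + b) %% q)%N :> nat.
Proof. by rewrite -[X in (_ %% X)%N]Zp_modE. Qed.

Definition rot_action (c1 c2 : R) (g : ptorus q 1) : 'rV[R]_2 -> 'rV[R]_2 :=
  rot2 (pi *+ 2 / q%:R *+ g ord0) c1 c2.

Lemma rot2_multiple_modn (k : nat) :
  rot2 (pi *+ 2 / q%:R *+ (k %% q)) = rot2 (pi *+ 2 / q%:R *+ k) :> (R -> R -> _).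
Proof.
have q_neq0 : q%:R != 0 :> R by rewrite pnatr_eq0 -lt0n ltnW.
rewrite {2}(divn_eq k q) mulrnDr addrC mulnC mulrnA.
by rewrite -(mulr_natr (_ / _) q) divfK // rot2D2pi.
Qed.

Lemma rot_action_isometric c1 c2 : isometric_action (rot_action c1 c2).
Proof.
split=> [g | x | g h x]; first exact: rot2_isometry.
  by rewrite /rot_action ffunE mulr0n rot2_0.
rewrite /rot_action ffunE Zp_add_val rot2_multiple_modn mulrnDr.
exact: rot2D.
Qed.

Lemma rot_action_max (c1 c2 : R) :
  rot_action c1 c2 [ffun=> ord_max] = rot2 (- (pi *+ 2 / q%:R)) c1 c2.
Proof.
have q_neq0 : q%:R != 0 :> R by rewrite pnatr_eq0 -lt0n ltnW.
rewrite /rot_action ffunE /= -[in RHS](rot2D2pi _ 1) mulr1n -mulr_natr.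
have -> : (Zp_trunc q).+1%:R = q%:R - 1 :> R.
  by rewrite -[q in RHS]Zp_modE -[in RHS]natr1 addrK.
by congr rot2; field.
Qed.

End CyclicRotationAction.

Section PolygonCentre.
Context {R : realType}.
Variable t : R.
Hypothesis cos_neq1 : cos t != 1.

(* (1/2, centre_y) is the centre of the rotation by t that moves the origin
   to (1, 0). *)
Definition centre_y : R := sin t / (2 * (1 - cos t)).

Let one_sub_cos_neq0 : 1 - cos t != 0. Proof. by rewrite subr_eq0 eq_sym. Qed.

Let sin_centre_y : sin t * centre_y = (1 + cos t) / 2.
Proof. by rewrite /centre_y mulrA -expr2 sin2cos2; field. Qed.

Let one_sub_cos_centre_y : (1 - cos t) * centre_y = sin t / 2.
Proof. by rewrite /centre_y; field. Qed.

Lemma rot2_origin_centre : rot2 t (1 / 2) centre_y (pt2 0 0) = pt2 1 0.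
Proof.
apply: row2P; rewrite !mxE /=.
- by have := sin_centre_y; lra.
- by have := one_sub_cos_centre_y; lra.
Qed.

Lemma rot2N_origin_centre :
  rot2 (- t) (1 / 2) centre_y (pt2 0 0) = pt2 (cos (pi - t)) (sin (pi - t)).
Proof.
rewrite [pi - t]addrC sinDpi cosDpi.
apply: row2P; rewrite !mxE /= cosN sinN.
- by have := sin_centre_y; lra.
- by have := one_sub_cos_centre_y; lra.
Qed.

End PolygonCentre.

Lemma cos_lt1 (R : realType) (t : R) : 0 < t < pi -> cos t < 1.
Proof. move=> t_bd; have := sin_gt0_pi t_bd; have := cos2Dsin2 t; nra. Qed.

Lemma polygon_angle_bounds (R : realType) (q : nat) : (2 < q)%N ->
  0 < pi *+ 2 / (q%:R : R) < pi.
Proof.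
move=> q_gt2; have q_gt0 : (0 : R) < q%:R by rewrite ltr0n (ltn_trans _ q_gt2).
apply/andP; split; first by rewrite divr_gt0 // mulrn_wgt0 // pi_gt0.
by rewrite ltr_pdivrMr // -(mulr_natr pi 2) ltr_pM2l ?pi_gt0 ?ltr_nat.
Qed.

Lemma isosceles_polygon_sub_ptoral (R : realType) (q : nat) : (2 < q)%N ->
  sub_ptoral q (isosceles (pi - pi *+ 2 / q%:R : R)).
Proof.
move=> q_gt2; set t : R := pi *+ 2 / q%:R.
have q_gt1 : (1 < q)%N by exact: ltnW.
have cos_neq1 : cos t != 1 by rewrite lt_eqF // cos_lt1 // polygon_angle_bounds.
exists 2%N, 1%N, (rot_action q (1 / 2) (centre_y t)), (pt2 0 0).
split=> //; first exact: rot_action_isometric.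
move=> x [->|[->|->]]; rewrite embed_id.
- by exists 0; rewrite /rot_action ffunE mulr0n rot2_0.
- exists [ffun=> 1]; rewrite /rot_action ffunE /= Zp_cast //.
  by rewrite modn_small // mulr1n rot2_origin_centre.
- by exists [ffun=> ord_max]; rewrite rot_action_max // rot2N_origin_centre.
Qed.

Lemma cvg_polygon_apex_angle (R : realType) (q : nat -> nat) :
  (forall j, (j < q j)%N) -> (pi - pi *+ 2 / (q j)%:R) @[j --> \oo] --> (pi : R).
Proof.
move=> q_gt; apply/cvgrPdist_lt => e e_gt0; near=> j.
have j_large : pi *+ 2 / e <= j%:R by near: j; apply: nbhs_infty_ger.
have q_gt0 : (0 : R) < (q j)%:R by rewrite ltr0n (leq_ltn_trans _ (q_gt j)).
rewrite opprB addrC subrK ger0_norm; last first.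
  by rewrite divr_ge0 ?ltW // mulrn_wgt0 // pi_gt0.
rewrite ltr_pdivrMr // -ltr_pdivrMl // mulrC.
by rewrite (le_lt_trans j_large) // ltr_nat.
Unshelve. all: by end_near.
Qed.

Theorem lemma4 (R : realType) :
  exists (p : nat -> nat) (al : nat -> R),
    [/\ forall j, prime (p j),
        (forall M : nat, exists N : nat, forall j, (N <= j)%N -> (M <= p j)%N),
        (forall j, 0 < al j < pi),
        al j @[j --> \oo] --> (pi : R) &
        forall j, sub_ptoral (p j) (isosceles (al j))].
Proof.
pose p j := s2val (prime_above j.+2).
have p_prime j : prime (p j) by rewrite /p; case: prime_above.
have p_gt j : (j.+2 < p j)%N by rewrite /p; case: prime_above.
have p_gt2 j : (2 < p j)%N by exact: leq_ltn_trans (p_gt j).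
have p_gtj j : (j < p j)%N by exact: ltn_trans (leqnSn _) (p_gt j).
exists p, (fun j => pi - pi *+ 2 / (p j)%:R); split=> //.
- by move=> M; exists M => j /leq_trans; apply; rewrite ltnW.
- by move=> j; have := @polygon_angle_bounds R _ (p_gt2 j); lra.
- exact: cvg_polygon_apex_angle.
- by move=> j; apply: isosceles_polygon_sub_ptoral.
Qed.
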